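(* Let $N\ge 1$, let $H\in\mathbb{C}^{N\times N}$ satisfy $H=H^\dagger=H^2$ (an orthogonal projector), let $|\psi_0\rangle\in\mathbb{C}^N$ be a unit vector and $\psi_0:=|\psi_0\rangle\langle\psi_0|$. Define $f:\mathrm{U}(N)\to\mathbb{R}$ by $f(U)=\operatorname{Tr}(HU\psi_0U^\dagger)$ and write $\psi_U:=U\psi_0U^\dagger$. Then the skew-Hermitian part of the Riemannian gradient of $f$ at $U$ is \[\widetilde{\operatorname{grad}} f(U)=[H,\psi_U]=H\psi_U-\psi_U H .\] Moreover, $\widetilde{\operatorname{grad}} f(U)=0$ if and only if $U$ is a global optimizer (global minimizer or global maximizer) of $f$ over $\mathrm{U}(N)$; and in that case $f(U)\in\{0,1\}$, where the value $0$ corresponds to the global minimum $0$ and the value $1$ to the global maximum $1$.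
   Context: $\mathrm{U}(N)=\{U\in\mathbb{C}^{N\times N}:U^\dagger U=I\}$ is regarded as a Riemannian submanifold of $\mathbb{C}^{N\times N}$ with the real inner product $\langle A,B\rangle=\operatorname{Re}\operatorname{Tr}(A^\dagger B)$ (the canonical metric induced by the Frobenius inner product). Its tangent space at $U$ is $\{\Omega U:\Omega^\dagger=-\Omega\}$. The Riemannian gradient $\operatorname{grad} f(U)$ is the unique tangent vector with $\langle \operatorname{grad} f(U),\xi\rangle=\mathrm{D}f(U)[\xi]$ for all tangent vectors $\xi$ at $U$; its skew-Hermitian part $\widetilde{\operatorname{grad}} f(U)$ is the unique skew-Hermitian matrix $\Omega$ with $\operatorname{grad} f(U)=\Omega U$. *)

From HB Require Import structures.
From mathcomp Require Import all_boot all_order all_algebra.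
From mathcomp Require Import all_classical all_reals all_analysis.
From mathcomp Require Import complex.
Set Implicit Arguments. Unset Strict Implicit. Unset Printing Implicit Defensive.
Import Order.TTheory GRing.Theory Num.Theory.
Local Open Scope ring_scope.



Definition adjmx (R : rcfType) (m n : nat) (A : 'M[R[i]]_(m, n)) : 'M[R[i]]_(n, m) :=
  (map_mx (@complex.conjc R) A)^T.

Definition ReC (R : rcfType) (z : R[i]) : R := complex.Re z.

Definition RtoC (R : rcfType) (t : R) : R[i] := complex.Complex t 0.

Definition is_unitary_mx (R : rcfType) (N : nat) (U : 'M[R[i]]_N) : Prop :=
  adjmx U *m U = 1%:M.

Definition is_hermitian_mx (R : rcfType) (N : nat) (A : 'M[R[i]]_N) : Prop :=
  adjmx A = A.

Definition is_skew_hermitian_mx (R : rcfType) (N : nat) (A : 'M[R[i]]_N) : Prop :=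
  adjmx A = - A.

Definition frob_inner (R : rcfType) (N : nat) (A B : 'M[R[i]]_N) : R :=
  ReC (\tr (adjmx A *m B)).

Definition is_tangent_UN (R : rcfType) (N : nat) (U xi : 'M[R[i]]_N) : Prop :=
  exists Om : 'M[R[i]]_N, is_skew_hermitian_mx Om /\ xi = Om *m U.

(* Df(U)[xi] = d: the directional derivative of (the smooth ambient
   extension of) f at U along xi equals d *)
Definition has_dir_deriv (R : realType) (N : nat) (f : 'M[R[i]]_N -> R)
    (U xi : 'M[R[i]]_N) (d : R) : Prop :=
  is_derive (0 : R) (1 : R) (fun t : R => f (U + RtoC t *: xi)) d.

Definition is_riem_grad (R : realType) (N : nat) (f : 'M[R[i]]_N -> R)
    (U G : 'M[R[i]]_N) : Prop :=
  is_tangent_UN U G /\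
  forall xi, is_tangent_UN U xi -> has_dir_deriv f U xi (frob_inner G xi).

Definition is_skew_grad (R : realType) (N : nat) (f : 'M[R[i]]_N -> R)
    (U Om : 'M[R[i]]_N) : Prop :=
  is_skew_hermitian_mx Om /\ is_riem_grad f U (Om *m U).

Definition costf (R : rcfType) (N : nat) (H psi0 : 'M[R[i]]_N) (U : 'M[R[i]]_N) : R :=
  ReC (\tr (H *m U *m psi0 *m adjmx U)).

From HB Require Import structures.
From mathcomp Require Import all_boot all_order all_algebra.
From mathcomp Require Import all_classical all_reals all_analysis.
From mathcomp Require Import complex.
From mathcomp Require Import ring lra.
Import Order.TTheory GRing.Theory Num.Theory.
Local Open Scope ring_scope.
Set Implicit Arguments. Unset Strict Implicit. Unset Printing Implicit Defensive.

(* Along a tangent vector [Om U], with [psi = U P U^†], the first variation of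
   [Tr (H X P X^†)] is [Re Tr ((psi H - H psi) Om)], which is the Frobenius
   product of [[H, psi]] with [Om]; since right translation by [U] is an
   isometry, [[H, psi] U] is the Riemannian gradient.
   For [P = v v^†] and [w = U v] the cost is [|H w|^2], which lies in [0, 1]
   because [H] is an orthogonal projector.  If [[H, w w^†] = 0] then
   [H w = (w^† H w) w], and [H^2 = H] forces [H w = 0] or [H w = w], i.e. the
   cost is 0 or 1.  Conversely, Householder reflections move [w] to any unit
   vector [z] with [w^† z] real, in particular to the normalised projection of
   [w] onto the range of [H] or of [1 - H]; so an optimal [U] must already
   have [H w = 0] (minimum) or [(1 - H) w = 0] (maximum). *)

Lemma mxtraceB (R : pzRingType) n (A B : 'M[R]_n) : \tr (A - B) = \tr A - \tr B.
Proof. exact: raddfB. Qed.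

Lemma mxtraceN (R : pzRingType) n (A : 'M[R]_n) : \tr (- A) = - \tr A.
Proof. exact: raddfN. Qed.

Section Adjoint.
Variable R : rcfType.

Lemma ReCD (z w : R[i]) : ReC (z + w) = ReC z + ReC w.
Proof. by case: z; case: w. Qed.

Lemma ReCN (z : R[i]) : ReC (- z) = - ReC z.
Proof. by case: z. Qed.

Lemma ReCB (z w : R[i]) : ReC (z - w) = ReC z - ReC w.
Proof. by case: z; case: w. Qed.

Lemma ReC_sum (I : finType) (F : I -> R[i]) : ReC (\sum_i F i) = \sum_i ReC (F i).
Proof. exact: (big_morph _ ReCD). Qed.

Lemma RtoCE (t : R) : RtoC t = (t%:C)%C.
Proof. by []. Qed.

Lemma ReC_RtoCM (t : R) (z : R[i]) : ReC (RtoC t * z) = t * ReC z.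
Proof. by case: z => a b; rewrite /ReC /= mul0r subr0. Qed.

Lemma adjmxD m n (A B : 'M[R[i]]_(m, n)) : adjmx (A + B) = adjmx A + adjmx B.
Proof. by apply/matrixP=> i j; rewrite !mxE rmorphD. Qed.

Lemma adjmxB m n (A B : 'M[R[i]]_(m, n)) : adjmx (A - B) = adjmx A - adjmx B.
Proof. by apply/matrixP=> i j; rewrite !mxE rmorphB. Qed.

Lemma adjmx0 m n : adjmx (0 : 'M[R[i]]_(m, n)) = 0.
Proof. by apply/matrixP=> i j; rewrite !mxE rmorph0. Qed.

Lemma adjmxM m n p (A : 'M[R[i]]_(m, n)) (B : 'M[R[i]]_(n, p)) :
  adjmx (A *m B) = adjmx B *m adjmx A.
Proof. by rewrite /adjmx map_mxM trmx_mul. Qed.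

Lemma adjmxK m n (A : 'M[R[i]]_(m, n)) : adjmx (adjmx A) = A.
Proof. by apply/matrixP=> i j; rewrite !mxE conjcK. Qed.

Lemma adjmxZ m n (a : R[i]) (A : 'M[R[i]]_(m, n)) :
  adjmx (a *: A) = conjc a *: adjmx A.
Proof. by apply/matrixP=> i j; rewrite !mxE rmorphM. Qed.

Lemma adjmx_scalar n (a : R[i]) : adjmx (a%:M : 'M[R[i]]_n) = (conjc a)%:M.
Proof.
by apply/matrixP=> i j; rewrite !mxE eq_sym; case: (i == j); rewrite ?rmorph0.
Qed.

Lemma adjmx1 n : adjmx (1%:M : 'M[R[i]]_n) = 1%:M.
Proof. by rewrite adjmx_scalar rmorph1. Qed.

Lemma adjmx_RtoCZ m n (t : R) (A : 'M[R[i]]_(m, n)) :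
  adjmx (RtoC t *: A) = RtoC t *: adjmx A.
Proof. by rewrite adjmxZ RtoCE conjc_real. Qed.

Lemma hermitian_conj m n (A : 'M[R[i]]_(m, n)) (P : 'M[R[i]]_n) :
  is_hermitian_mx P -> is_hermitian_mx (A *m P *m adjmx A).
Proof. by move=> hP; rewrite /is_hermitian_mx !adjmxM adjmxK hP mulmxA. Qed.

Lemma hermitian_gram m n (A : 'M[R[i]]_(m, n)) : is_hermitian_mx (A *m adjmx A).
Proof. by rewrite /is_hermitian_mx adjmxM adjmxK. Qed.

Lemma unitary_mulmx_adj n (U : 'M[R[i]]_n) : is_unitary_mx U -> U *m adjmx U = 1%:M.
Proof. exact: mulmx1C. Qed.

Lemma unitary_mulmx n (U V : 'M[R[i]]_n) :
  is_unitary_mx U -> is_unitary_mx V -> is_unitary_mx (U *m V).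
Proof.
by move=> hU hV; rewrite /is_unitary_mx adjmxM mulmxA -(mulmxA _ _ U) hU mulmx1.
Qed.

Lemma commutator_skew n (A B : 'M[R[i]]_n) :
  is_hermitian_mx A -> is_hermitian_mx B -> is_skew_hermitian_mx (A *m B - B *m A).
Proof. by move=> hA hB; rewrite /is_skew_hermitian_mx adjmxB !adjmxM hA hB opprB. Qed.

Lemma skew_hermitianB n (A B : 'M[R[i]]_n) :
  is_skew_hermitian_mx A -> is_skew_hermitian_mx B -> is_skew_hermitian_mx (A - B).
Proof.
by move=> hA hB; rewrite /is_skew_hermitian_mx adjmxB hA hB opprB opprK addrC.
Qed.

End Adjoint.

Section FrobeniusNorm.
Variable R : rcfType.

Definition frob_norm2 m n (A : 'M[R[i]]_(m, n)) : R := ReC (\tr (adjmx A *m A)).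

Lemma frob_norm2E m n (A : 'M[R[i]]_(m, n)) :
  frob_norm2 A = \sum_j \sum_k (complex.Re (A k j) ^+ 2 + complex.Im (A k j) ^+ 2).
Proof.
rewrite /frob_norm2 /mxtrace ReC_sum; apply: eq_bigr => j _.
rewrite mxE ReC_sum; apply: eq_bigr => k _.
by rewrite !mxE; case: (A k j) => a b; rewrite /ReC /=; ring.
Qed.

Lemma frob_norm20 m n : frob_norm2 (0 : 'M[R[i]]_(m, n)) = 0.
Proof. by rewrite /frob_norm2 mulmx0 mxtrace0. Qed.

Lemma frob_norm2_ge0 m n (A : 'M[R[i]]_(m, n)) : 0 <= frob_norm2 A.
Proof.
by rewrite frob_norm2E; do 2!apply: sumr_ge0 => ? _; rewrite addr_ge0 ?sqr_ge0.
Qed.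

Lemma frob_norm2_eq0 m n (A : 'M[R[i]]_(m, n)) : (frob_norm2 A == 0) = (A == 0).
Proof.
apply/eqP/eqP => [|->]; last exact: frob_norm20.
have sq_ge0 (z : R[i]) : 0 <= complex.Re z ^+ 2 + complex.Im z ^+ 2.
  by rewrite addr_ge0 ?sqr_ge0.
rewrite frob_norm2E => A0; apply/matrixP => k j; rewrite mxE.
have col0 := @psumr_eq0P _ _ _ _
  (fun j _ => sumr_ge0 _ (fun k _ => sq_ge0 (A k j))) A0 j isT.
move: (@psumr_eq0P _ _ _ _ (fun k _ => sq_ge0 (A k j)) col0 k isT).
case: (A k j) => a b /= /eqP.
by rewrite paddr_eq0 ?sqr_ge0 // !sqrf_eq0 => /andP[/eqP-> /eqP->].
Qed.

Lemma frob_norm2_gt0 m n (A : 'M[R[i]]_(m, n)) : (0 < frob_norm2 A) = (A != 0).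
Proof. by rewrite lt_def frob_norm2_eq0 frob_norm2_ge0 andbT. Qed.

Lemma frob_inner_diag n (A : 'M[R[i]]_n) : frob_inner A A = frob_norm2 A.
Proof. by []. Qed.

Lemma frob_innerBl n (A B C : 'M[R[i]]_n) :
  frob_inner (A - B) C = frob_inner A C - frob_inner B C.
Proof. by rewrite /frob_inner adjmxB mulmxBl mxtraceB ReCB. Qed.

Lemma frob_inner_unitary n (U A B : 'M[R[i]]_n) :
  is_unitary_mx U -> frob_inner (A *m U) (B *m U) = frob_inner A B.
Proof.
move=> hU; rewrite /frob_inner adjmxM -!mulmxA mxtrace_mulC -!mulmxA.
by rewrite unitary_mulmx_adj // mulmx1.
Qed.

Lemma gram_cV n (y : 'cV[R[i]]_n) : adjmx y *m y = (RtoC (frob_norm2 y))%:M.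
Proof.
rewrite [LHS]mx11_scalar /frob_norm2 /mxtrace big_ord1; congr (_%:M).
have yy_herm : adjmx (adjmx y *m y) = adjmx y *m y by rewrite adjmxM adjmxK.
have : conjc ((adjmx y *m y) 0 0) = (adjmx y *m y) 0 0.
  by rewrite -[in RHS]yy_herm !mxE.
by case: (_ 0 0) => a b [b0]; rewrite /RtoC /ReC; congr Complex; lra.
Qed.

Lemma frob_norm2_unit n (w : 'cV[R[i]]_n) : adjmx w *m w = 1%:M -> frob_norm2 w = 1.
Proof. by move=> hw; rewrite /frob_norm2 hw mxtrace1. Qed.

Lemma unitary_mulmx_unit n (U : 'M[R[i]]_n) (v : 'cV[R[i]]_n) :
  is_unitary_mx U -> adjmx v *m v = 1%:M -> adjmx (U *m v) *m (U *m v) = 1%:M.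
Proof. by move=> hU hv; rewrite adjmxM mulmxA -(mulmxA _ (adjmx U)) hU mulmx1. Qed.

End FrobeniusNorm.

Lemma mulmx_compl_eq0 (R : pzRingType) n p (K : 'M[R]_n) (y : 'M[R]_(n, p)) :
  ((1%:M - K) *m y == 0) = (K *m y == y).
Proof. by rewrite mulmxBl mul1mx subr_eq0 eq_sym. Qed.

Lemma mulmx_compl_id (R : pzRingType) n p (K : 'M[R]_n) (y : 'M[R]_(n, p)) :
  ((1%:M - K) *m y == y) = (K *m y == 0).
Proof. by rewrite mulmxBl mul1mx subr_eq addrC -subr_eq subrr eq_sym. Qed.

Section Projector.
Variables (R : rcfType) (n : nat) (K : 'M[R[i]]_n).
Hypotheses (K_herm : is_hermitian_mx K) (K_idem : K *m K = K).

Lemma frob_norm2_proj (z : 'cV[R[i]]_n) :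
  frob_norm2 (K *m z) = ReC (\tr (adjmx z *m K *m z)).
Proof. by rewrite /frob_norm2 adjmxM K_herm !mulmxA -(mulmxA _ K K) K_idem. Qed.

Lemma compl_proj_herm : is_hermitian_mx (1%:M - K).
Proof. by rewrite /is_hermitian_mx adjmxB adjmx1 K_herm. Qed.

Lemma compl_proj_idem : (1%:M - K) *m (1%:M - K) = 1%:M - K.
Proof. by rewrite mulmxBl !mulmxBr !mul1mx mulmx1 K_idem subrr subr0. Qed.

Lemma proj_rank1_commP (w : 'cV[R[i]]_n) : adjmx w *m w = 1%:M ->
  K *m (w *m adjmx w) - w *m adjmx w *m K = 0 <-> K *m w = 0 \/ K *m w = w.
Proof.
move=> hw; have wwK : w *m adjmx w *m K = w *m adjmx (K *m w).
  by rewrite adjmxM K_herm mulmxA.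
split; last by rewrite wwK mulmxA => -[] ->; rewrite ?mul0mx ?adjmx0 ?mulmx0 subrr.
move/eqP; rewrite subr_eq0 => /eqP comm.
set l := (adjmx w *m K *m w) 0 0.
have Kw : K *m w = l *: w.
  (* [K w = K w (w^† w) = w w^† K w] since [K] commutes with [w w^†]. *)
  rewrite -[K *m w]mulmx1 -hw !mulmxA -(mulmxA K) comm -!mulmxA (mulmxA (adjmx w)).
  by rewrite [adjmx w *m K *m w]mx11_scalar mul_mx_scalar.
have l_idem : l * l = l.
  have : (l * l) *: w = l *: w by rewrite -scalerA -Kw scalemxAr -Kw mulmxA K_idem.
  move/(congr1 (mulmx (adjmx w))); rewrite -!scalemxAr hw => /matrixP /(_ 0 0).
  by rewrite !mxE eqxx !mulr1.
have [l0|l1] : l = 0 \/ l = 1.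
  have /eqP : l * (l - 1) = 0 by rewrite mulrBr mulr1 l_idem subrr.
  by rewrite mulf_eq0 subr_eq0 => /orP[] /eqP; [left|right].
- by left; rewrite Kw l0 scale0r.
- by right; rewrite Kw l1 scale1r.
Qed.

Lemma exists_unit_in_range (w : 'cV[R[i]]_n) : K *m w != 0 ->
  exists z : 'cV[R[i]]_n,
    [/\ adjmx z *m z = 1%:M, adjmx w *m z = adjmx z *m w & K *m z = z].
Proof.
move=> Kw0; set r := Num.sqrt (frob_norm2 (K *m w)).
have r_gt0 : 0 < r by rewrite sqrtr_gt0 frob_norm2_gt0.
have r_sqr : r ^+ 2 = frob_norm2 (K *m w) by rewrite sqr_sqrtr ?frob_norm2_ge0.
exists (RtoC r^-1 *: (K *m w)); split.
- rewrite adjmx_RtoCZ -scalemxAl -scalemxAr scalerA gram_cV scale_scalar_mx.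
  rewrite !RtoCE -!rmorphM -r_sqr /=.
  have -> : r^-1 * r^-1 * r ^+ 2 = 1 by field; rewrite gt_eqF.
  by rewrite rmorph1.
- rewrite adjmx_RtoCZ -scalemxAl -scalemxAr; congr (_ *: _).
  by rewrite adjmxM K_herm mulmxA.
- by rewrite -scalemxAr mulmxA K_idem.
Qed.

End Projector.

Lemma frob_norm2_compl_proj (R : rcfType) n (K : 'M[R[i]]_n) (z : 'cV[R[i]]_n) :
  is_hermitian_mx K -> K *m K = K -> adjmx z *m z = 1%:M ->
  frob_norm2 ((1%:M - K) *m z) = 1 - frob_norm2 (K *m z).
Proof.
move=> K_herm K_idem hz.
rewrite (frob_norm2_proj (compl_proj_herm K_herm) (compl_proj_idem K_idem)).
by rewrite frob_norm2_proj // mulmxBr mulmx1 mulmxBl hz mxtraceB ReCB mxtrace1.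
Qed.

Lemma frob_norm2_proj_le1 (R : rcfType) n (K : 'M[R[i]]_n) (z : 'cV[R[i]]_n) :
  is_hermitian_mx K -> K *m K = K -> adjmx z *m z = 1%:M -> frob_norm2 (K *m z) <= 1.
Proof.
by move=> K_herm K_idem hz; rewrite -subr_ge0 -frob_norm2_compl_proj // frob_norm2_ge0.
Qed.

Lemma costf_rank1 (R : rcfType) n (K V : 'M[R[i]]_n) (v : 'cV[R[i]]_n) :
  is_hermitian_mx K -> K *m K = K ->
  costf K (v *m adjmx v) V = frob_norm2 (K *m (V *m v)).
Proof.
move=> K_herm K_idem; rewrite frob_norm2_proj // /costf.
have -> : K *m V *m (v *m adjmx v) *m adjmx V = (K *m (V *m v)) *m adjmx (V *m v).
  by rewrite adjmxM !mulmxA.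
by rewrite mxtrace_mulC !mulmxA.
Qed.

Section Householder.
Variables (R : rcfType) (n : nat).

(* For [x = 0] the junk value [2 / 0 = 0] makes this the identity. *)
Definition householder_mx (x : 'cV[R[i]]_n) : 'M[R[i]]_n :=
  1%:M - RtoC (2 / frob_norm2 x) *: (x *m adjmx x).

Lemma householder_mx_unitary x : is_unitary_mx (householder_mx x).
Proof.
rewrite /is_unitary_mx /householder_mx adjmxB adjmx1 adjmx_RtoCZ hermitian_gram.
set a := RtoC _; set X := x *m adjmx x.
have XX : X *m X = RtoC (frob_norm2 x) *: X.
  by rewrite /X mulmxA -(mulmxA x) gram_cV mul_mx_scalar -scalemxAl.
have aak : a * a * RtoC (frob_norm2 x) = a + a.
  have e : 2 / frob_norm2 x * (2 / frob_norm2 x) * frob_norm2 x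
           = 2 / frob_norm2 x + 2 / frob_norm2 x.
    have [->|x0] := eqVneq (frob_norm2 x) 0; first by rewrite invr0 !mulr0 addr0.
    by field.
  by rewrite /a !RtoCE -!rmorphM -rmorphD e.
rewrite !(mulmxBl, mulmxBr, mul1mx, mulmx1) -!scalemxAl -!scalemxAr XX !scalerA aak.
by rewrite scalerDl opprB addrK subrK.
Qed.

Lemma householder_mx_swap (w z : 'cV[R[i]]_n) :
  adjmx w *m w = 1%:M -> adjmx z *m z = 1%:M -> adjmx w *m z = adjmx z *m w ->
  householder_mx (w - z) *m w = z.
Proof.
move=> hw hz hwz; have [<-|wz] := eqVneq w z.
  by rewrite /householder_mx subrr mul0mx scaler0 subr0 mul1mx.
set x := w - z; set c := (adjmx x *m w) 0 0.
have x_gram : c *+ 2 = RtoC (frob_norm2 x).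
  (* this is where the overlap [w^† z] has to be real *)
  have : adjmx x *m w *+ 2 = adjmx x *m x.
    by rewrite /x adjmxB !(mulmxBl, mulmxBr) hw hz hwz mulr2n opprB.
  by rewrite gram_cV => /matrixP /(_ 0 0); rewrite mxE -/c !mxE eqxx mulr1n.
have ac : RtoC (2 / frob_norm2 x) * c = 1.
  have x0 : frob_norm2 x != 0 by rewrite frob_norm2_eq0 subr_eq0.
  have -> : RtoC (2 / frob_norm2 x) = 2 / RtoC (frob_norm2 x).
    by rewrite !RtoCE rmorphM rmorphV ?unitfE // rmorph_nat.
  rewrite -x_gram; field; move: x0; apply: contra_neq => c0.
  by rewrite -[frob_norm2 x]/(ReC (RtoC (frob_norm2 x))) -x_gram c0 mul0rn.
rewrite /householder_mx mulmxDl mul1mx mulNmx -scalemxAl -mulmxA.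
rewrite [adjmx x *m w]mx11_scalar -/c mul_mx_scalar scalerA ac scale1r.
by rewrite /x opprB addrC subrK.
Qed.

End Householder.

Section UnitaryOrbit.
Variables (R : rcfType) (n : nat) (v : 'cV[R[i]]_n).
Hypothesis v_unit : adjmx v *m v = 1%:M.

Lemma unitary_orbit_meets_range (K U : 'M[R[i]]_n) :
  is_hermitian_mx K -> K *m K = K -> is_unitary_mx U -> K *m (U *m v) != 0 ->
  exists2 V, is_unitary_mx V & K *m (V *m v) = V *m v.
Proof.
move=> K_herm K_idem hU KUv0.
have [z [z_unit Uvz Kz]] := exists_unit_in_range K_herm K_idem KUv0.
exists (householder_mx (U *m v - z) *m U).
  exact: unitary_mulmx (householder_mx_unitary _) hU.
by rewrite -mulmxA householder_mx_swap // unitary_mulmx_unit.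
Qed.

Lemma proj_orbit_min (K U : 'M[R[i]]_n) :
  is_hermitian_mx K -> K *m K = K -> is_unitary_mx U ->
  (forall V, is_unitary_mx V ->
     frob_norm2 (K *m (U *m v)) <= frob_norm2 (K *m (V *m v))) ->
  K *m (U *m v) = 0 \/ K *m (U *m v) = U *m v.
Proof.
move=> K_herm K_idem hU Umin.
have [KUv|KUv] := eqVneq ((1%:M - K) *m (U *m v)) 0.
  by right; apply/eqP; rewrite -mulmx_compl_eq0 KUv.
have [V hV] := unitary_orbit_meets_range (compl_proj_herm K_herm)
  (compl_proj_idem K_idem) hU KUv.
move/eqP; rewrite mulmx_compl_id => /eqP KVv.
left; apply/eqP; rewrite -frob_norm2_eq0 eq_le frob_norm2_ge0 andbT.
by rewrite -(frob_norm20 R n 1) -KVv Umin.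
Qed.

Lemma proj_orbit_max (K U : 'M[R[i]]_n) :
  is_hermitian_mx K -> K *m K = K -> is_unitary_mx U ->
  (forall V, is_unitary_mx V ->
     frob_norm2 (K *m (V *m v)) <= frob_norm2 (K *m (U *m v))) ->
  K *m (U *m v) = 0 \/ K *m (U *m v) = U *m v.
Proof.
move=> K_herm K_idem hU Umax.
have [|KUv|KUv] := proj_orbit_min (compl_proj_herm K_herm) (compl_proj_idem K_idem) hU.
- move=> V hV; rewrite !frob_norm2_compl_proj ?unitary_mulmx_unit //.
  by rewrite lerD2l lerN2 Umax.
- by right; apply/eqP; rewrite -mulmx_compl_eq0 KUv.
- by left; apply/eqP; rewrite -mulmx_compl_id KUv.
Qed.

End UnitaryOrbit.

Lemma is_derive_unique (R : realType) (f : R -> R) (x v d1 d2 : R) :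
  is_derive x v f d1 -> is_derive x v f d2 -> d1 = d2.
Proof. by move=> h1 h2; rewrite -(@derive_val _ _ _ _ _ _ _ h1) derive_val. Qed.

Section CostGradient.
Variables (R : realType) (n : nat) (H P : 'M[R[i]]_n).

Definition costf_form (A B : 'M[R[i]]_n) : R := ReC (\tr (H *m A *m P *m adjmx B)).

Lemma costfE X : costf H P X = costf_form X X.
Proof. by []. Qed.

Lemma costf_formDl A1 A2 B : costf_form (A1 + A2) B = costf_form A1 B + costf_form A2 B.
Proof. by rewrite /costf_form mulmxDr !mulmxDl mxtraceD ReCD. Qed.

Lemma costf_formDr A B1 B2 : costf_form A (B1 + B2) = costf_form A B1 + costf_form A B2.
Proof. by rewrite /costf_form adjmxD mulmxDr mxtraceD ReCD. Qed.

Lemma costf_formZl t A B : costf_form (RtoC t *: A) B = t * costf_form A B.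
Proof. by rewrite /costf_form -scalemxAr -!scalemxAl mxtraceZ ReC_RtoCM. Qed.

Lemma costf_formZr t A B : costf_form A (RtoC t *: B) = t * costf_form A B.
Proof. by rewrite /costf_form adjmx_RtoCZ -scalemxAr mxtraceZ ReC_RtoCM. Qed.

Lemma has_dir_deriv_costf U xi :
  has_dir_deriv (costf H P) U xi (costf_form U xi + costf_form xi U).
Proof.
rewrite /has_dir_deriv.
have -> : (fun t : R => costf H P (U + RtoC t *: xi)) =
    (fun t => costf_form U U + t * (costf_form U xi + costf_form xi U)
              + t ^+ 2 * costf_form xi xi).
  apply: funext => t; rewrite costfE.
  rewrite costf_formDl !costf_formDr !costf_formZl !costf_formZr.
  by rewrite mulrDr expr2 -mulrA !addrA.
apply: is_derive_eq.
rewrite !(scaler0, scale0r, add0r, addr0, mul1r, expr0n, mulr0).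
by rewrite /GRing.scale /= mulr1.
Qed.

Hypotheses (H_herm : is_hermitian_mx H) (P_herm : is_hermitian_mx P).

Lemma has_dir_deriv_costf_tangent U Om : is_skew_hermitian_mx Om ->
  let psi := U *m P *m adjmx U in
  has_dir_deriv (costf H P) U (Om *m U) (frob_inner (H *m psi - psi *m H) Om).
Proof.
move=> Om_skew psi; have psi_herm : is_hermitian_mx psi := hermitian_conj U P_herm.
set d := frob_inner _ _.
suff -> : d = costf_form U (Om *m U) + costf_form (Om *m U) U.
  exact: has_dir_deriv_costf.
rewrite /d /frob_inner /costf_form adjmxB (adjmxM H psi) (adjmxM psi H) H_herm psi_herm.
rewrite adjmxM Om_skew.
rewrite !mulmxN mxtraceN ReCN mulmxBl mxtraceB ReCB addrC !mulmxA; congr (_ + _).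
have -> : H *m Om *m U *m P *m adjmx U = (H *m Om) *m psi by rewrite /psi !mulmxA.
by rewrite [in RHS]mxtrace_mulC mulmxA.
Qed.

Lemma skew_grad_costfP U Om : is_unitary_mx U ->
  let psi := U *m P *m adjmx U in
  is_skew_grad (costf H P) U Om <-> Om = H *m psi - psi *m H.
Proof.
move=> hU psi; set C := H *m psi - psi *m H.
have C_skew : is_skew_hermitian_mx C.
  exact: commutator_skew H_herm (hermitian_conj U P_herm).
have C_deriv X : is_skew_hermitian_mx X ->
    has_dir_deriv (costf H P) U (X *m U) (frob_inner C X).
  exact: has_dir_deriv_costf_tangent.
split=> [[Om_skew [_ Om_grad]] | ->]; last first.
  split=> //; split=> [|xi [X [X_skew ->]]]; first by exists C.
  by rewrite frob_inner_unitary //; exact: C_deriv.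
have D_skew := skew_hermitianB Om_skew C_skew.
have := Om_grad _ (ex_intro _ _ (conj D_skew erefl)).
rewrite frob_inner_unitary // => /is_derive_unique /(_ (C_deriv _ D_skew)) OmC.
apply/eqP; rewrite -subr_eq0 -frob_norm2_eq0 -frob_inner_diag frob_innerBl OmC.
by rewrite subrr.
Qed.

End CostGradient.

Theorem theorem4p1 (R : realType) (N : nat) (HN : (0 < N)%N)
    (H : 'M[R[i]]_N) (v : 'cV[R[i]]_N)
    (HH : is_hermitian_mx H) (HP : H *m H = H)
    (Hv : adjmx v *m v = 1%:M) :
  let psi0 := v *m adjmx v in
  let f := costf H psi0 in
  forall U : 'M[R[i]]_N, is_unitary_mx U ->
  let psiU := U *m psi0 *m adjmx U in
  (forall Om : 'M[R[i]]_N, is_skew_grad f U Om <-> Om = H *m psiU - psiU *m H) /\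
  (H *m psiU - psiU *m H = 0 <->
     ((forall V : 'M[R[i]]_N, is_unitary_mx V -> f U <= f V) \/
      (forall V : 'M[R[i]]_N, is_unitary_mx V -> f V <= f U))) /\
  (H *m psiU - psiU *m H = 0 ->
     [/\ f U = 0 \/ f U = 1,
         f U = 0 -> forall V : 'M[R[i]]_N, is_unitary_mx V -> f U <= f V
       & f U = 1 -> forall V : 'M[R[i]]_N, is_unitary_mx V -> f V <= f U]).
Proof.
move=> psi0 f U hU psiU.
split=> [Om|]; first by have := skew_grad_costfP HH (hermitian_gram v) Om hU.
have fE V : f V = frob_norm2 (H *m (V *m v)) by exact: costf_rank1.
have f_ge0 V : 0 <= f V by rewrite fE frob_norm2_ge0.
have f_le1 V : is_unitary_mx V -> f V <= 1.
  by move=> hV; rewrite fE frob_norm2_proj_le1 // unitary_mulmx_unit.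
have critP : H *m psiU - psiU *m H = 0 <-> H *m (U *m v) = 0 \/ H *m (U *m v) = U *m v.
  have -> : psiU = U *m v *m adjmx (U *m v) by rewrite /psiU /psi0 adjmxM !mulmxA.
  exact/proj_rank1_commP/unitary_mulmx_unit.
have crit_f01 : H *m (U *m v) = 0 \/ H *m (U *m v) = U *m v -> f U = 0 \/ f U = 1.
  rewrite fE => -[->|->]; [left; exact: frob_norm20 | right].
  exact/frob_norm2_unit/unitary_mulmx_unit.
split; last first.
  move=> /critP /crit_f01 fU01; split=> // -> V hV; [exact: f_ge0 | exact: f_le1].
split=> [/critP /crit_f01 [-> | ->] | [Umin | Umax]].
- by left=> V _; exact: f_ge0.
- by right=> V hV; exact: f_le1.
- by apply/critP/(proj_orbit_min Hv HH HP hU) => V hV; rewrite -!fE Umin.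
- by apply/critP/(proj_orbit_max Hv HH HP hU) => V hV; rewrite -!fE Umax.
Qed.
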